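(* Let $\mathcal G$ be a CFG and $0<p<1$ with $\Pr_{term}(\mathcal G)\ge1-p$. Then for every $n\in\mathbb N$, $n\ge1$, there exist the following objects, all definable in the first-order theory of $(\mathbb Q,+,\cdot,<)$: - an inductive invariant $\mathsf{Inv}_n$ containing the initial state $\sigma_{init}$; - a function $\mathsf{SI}_n:\mathsf{Inv}_n\to\mathbb R$ with $\mathsf{SI}_n(\sigma_{init})\le p+\frac1n$, $\mathsf{SI}_n\ge0$, and $\mathsf{SI}_n$ a supermartingale function on $\mathsf{Inv}_n$; - a real $\epsilon_n>0$; - a function $U_n:\mathsf{Inv}_n\to\mathbb N$, bounded above by some $H_n$, with $U_n(\gamma)=0$ for every $\gamma$ that satisfies $\mathsf{SI}_n(\gamma)\ge1$ or $\gamma=\sigma_\bot$. Moreover, for every other state $(l,\mathbf x)\in\mathsf{Inv}_n$: - at assignment or nondeterministic states, $U_n(\sigma')<U_n(l,\mathbf x)$ for every successor $\sigma'$; - at probabilistic states, $\sum\mathsf{Pr}(l,l')[\mathbf x]>\epsilon_n$, where the sum ranges over the successors $(l',\mathbf x')$ with $U_n(l',\mathbf x')<U_n(l,\mathbf x)$.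
   Context: A probabilistic control flow graph (CFG) is a tuple $\mathcal G=(L,V,l_{init},\mathbf x_{init},\mapsto,G,\mathsf{Pr},\mathsf{Upd})$. $L$ is a finite set of locations, partitioned into assignment, nondeterministic and probabilistic locations. The variables range over $\mathbb Q$. The initial state is $\sigma_{init}=(l_{init},\mathbf x_{init})$. There are finitely many guarded transitions. At probabilistic locations, each outgoing transition $(l,l')$ carries a probability expression $\mathsf{Pr}(l,l')$ whose values are positive and sum to $1$ over the enabled transitions. Assignment locations have at most one outgoing transition, carrying an update of one variable by an arithmetic expression. A state is a pair $(l,\mathbf x)$. Every state has at least one, and finitely many, successors. Schedulers map finite paths ending in nondeterministic states to successors and induce probability measures $\mathbb P_{\mathfrak s}$ on runs. The terminal state is $\sigma_\bot=(l_{out},\mathbf 0)$. $\Pr_{term}(\mathcal G)=\inf_{\mathfrak s}\mathbb P_{\mathfrak s}[\text{run visits }\sigma_\bot]$. An inductive invariant is a set of states closed under successors. A function $f:\mathsf{Inv}\to\mathbb R$ is a supermartingale function on $\mathsf{Inv}$ if, at every non-terminal $(l,\mathbf x)\in\mathsf{Inv}$: - at assignment or nondeterministic states, $f(l,\mathbf x)\ge f(\sigma')$ for every successor $\sigma'$; - at probabilistic states, $f(l,\mathbf x)\ge\sum\mathsf{Pr}(l,l')[\mathbf x]f(l',\mathbf x')$, summed over successors. Definability: states are encoded as tuples of rationals, with locations encoded as natural numbers. A set of states, or an $\mathbb N$-valued function, is definable if it, respectively its graph, is defined by a first-order formula over $(\mathbb Q,+,\cdot,<)$. A real-valued function $f$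 is definable if the relation $\{(\sigma,q):q\in\mathbb Q,\ q\le f(\sigma)\}$ is so definable. *)

From HB Require Import structures.
From mathcomp Require Import all_boot all_order all_algebra.
From mathcomp Require Import all_classical all_reals.

Set Implicit Arguments.
Unset Strict Implicit.
Unset Printing Implicit Defensive.

Import Order.TTheory GRing.Theory Num.Theory.
Local Open Scope classical_set_scope.
Local Open Scope ring_scope.

Inductive aexpr (d : nat) : Type :=
| AVar of 'I_d
| AConst of rat
| ANeg of aexpr d
| AAdd of aexpr d & aexpr d
| AMul of aexpr d & aexpr d.

Fixpoint aeval (d : nat) (x : {ffun 'I_d -> rat}) (e : aexpr d) : rat :=
  match e with
  | AVar i => x i
  | AConst q => q
  | ANeg e1 => - aeval x e1
  | AAdd e1 e2 => aeval x e1 + aeval x e2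
  | AMul e1 e2 => aeval x e1 * aeval x e2
  end.

Inductive bexpr (d : nat) : Type :=
| BTrue
| BLt of aexpr d & aexpr d
| BLe of aexpr d & aexpr d
| BEq of aexpr d & aexpr d
| BNot of bexpr d
| BAnd of bexpr d & bexpr d
| BOr of bexpr d & bexpr d.

Fixpoint beval (d : nat) (x : {ffun 'I_d -> rat}) (b : bexpr d) : bool :=
  match b with
  | BTrue => true
  | BLt e1 e2 => aeval x e1 < aeval x e2
  | BLe e1 e2 => aeval x e1 <= aeval x e2
  | BEq e1 e2 => aeval x e1 == aeval x e2
  | BNot b1 => ~~ beval x b1
  | BAnd b1 b2 => beval x b1 && beval x b2
  | BOr b1 b2 => beval x b1 || beval x b2
  end.

Inductive lkind := LAssign | LNondet | LProb.

(* Transitions are the pairs (l,l') with [edge l l'], each carrying a guard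
   [guard l l'] and (for probabilistic l) a probability expression
   [prob l l'].  An assignment location carries the update of its (unique)
   outgoing transition: [Some (v, e)] is  v := e ;  [None] is the trivial
   update (leaving all variables unchanged). *)
Record CFG := MkCFG {
  nL : nat;
  nV : nat;
  kind : 'I_nL -> lkind;
  l_init : 'I_nL;
  x_init : {ffun 'I_nV -> rat};
  l_out : 'I_nL;
  edge : 'I_nL -> 'I_nL -> bool;
  guard : 'I_nL -> 'I_nL -> bexpr nV;
  prob : 'I_nL -> 'I_nL -> aexpr nV;
  upd : 'I_nL -> option ('I_nV * aexpr nV)
}.
Arguments kind : clear implicits.
Arguments edge : clear implicits.
Arguments guard : clear implicits.
Arguments prob : clear implicits.
Arguments upd : clear implicits.
Arguments x_init : clear implicits.
Arguments l_init : clear implicits.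
Arguments l_out : clear implicits.

Definition state (G : CFG) := ('I_(nL G) * {ffun 'I_(nV G) -> rat})%type.

Definition sigma_init (G : CFG) : state G := (l_init G, x_init G).
Definition sigma_bot (G : CFG) : state G := (l_out G, [ffun => 0]).

Definition enabled (G : CFG) (l l' : 'I_(nL G)) (x : {ffun 'I_(nV G) -> rat})
  : bool := edge G l l' && beval x (guard G l l').

Arguments enabled : clear implicits.

Definition post (G : CFG) (l : 'I_(nL G)) (x : {ffun 'I_(nV G) -> rat})
  : {ffun 'I_(nV G) -> rat} :=
  match kind G l with
  | LAssign =>
      match upd G l with
      | Some (v, e) => [ffun j => if j == v then aeval x e else x j]
      | None => x
      end
  | _ => x
  end.

Arguments post : clear implicits.

Definition succ (G : CFG) (s s' : state G) : bool :=
  [exists l' : 'I_(nL G), enabled G s.1 l' s.2 && (s' == (l', post G s.1 s.2))].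

Arguments succ : clear implicits.

Definition wf_CFG (G : CFG) : Prop :=
  [/\ (forall l l1 l2, kind G l = LAssign -> edge G l l1 -> edge G l l2 -> l1 = l2),
      (forall s : state G, exists s' : state G, succ G s s') &
      (forall l x, kind G l = LProb ->
         (forall l', enabled G l l' x -> 0 < aeval x (prob G l l')) /\
         \sum_(l' | enabled G l l' x) aeval x (prob G l l') = 1)].

(* A scheduler maps a finite path, given as (prefix h, last state s), to a
   successor of s whenever s is nondeterministic. *)
Definition scheduler (G : CFG) := seq (state G) -> state G -> state G.

Definition valid_sched (G : CFG) (sch : scheduler G) : Prop :=
  forall h s, kind G s.1 = LNondet -> succ G s (sch h s).

Arguments valid_sched : clear implicits.

(* probability, under [sch], that the run extending the path (h, s) visits
   sigma_bot within k further steps *)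
Fixpoint reachk (R : realType) (G : CFG) (sch : scheduler G) (k : nat)
    (h : seq (state G)) (s : state G) {struct k} : R :=
  if s == sigma_bot G then 1 else
  match k with
  | 0 => 0
  | k'.+1 =>
      match kind G s.1 with
      | LNondet => reachk R sch k' (rcons h s) (sch h s)
      | LAssign => \sum_(l' | enabled G s.1 l' s.2)
                     reachk R sch k' (rcons h s) (l', post G s.1 s.2)
      | LProb => \sum_(l' | enabled G s.1 l' s.2)
                   ratr (aeval s.2 (prob G s.1 l')) *
                   reachk R sch k' (rcons h s) (l', s.2)
      end
  end.

Arguments reachk : clear implicits.

Definition Pr_visit (R : realType) (G : CFG) (sch : scheduler G) : R :=
  sup (range (fun k => reachk R G sch k [::] (sigma_init G))).

Arguments Pr_visit : clear implicits.

Definition Pr_term (R : realType) (G : CFG) : R :=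
  inf [set Pr_visit R G sch | sch in [set sch | valid_sched G sch]].

Definition inductive_invariant (G : CFG) (Inv : set (state G)) : Prop :=
  forall s s', Inv s -> succ G s s' -> Inv s'.

Definition supermartingale (R : realType) (G : CFG) (Inv : set (state G))
    (f : state G -> R) : Prop :=
  forall s, Inv s -> s != sigma_bot G ->
    match kind G s.1 with
    | LProb => \sum_(l' | enabled G s.1 l' s.2)
                 ratr (aeval s.2 (prob G s.1 l')) * f (l', s.2) <= f s
    | _ => forall s', succ G s s' -> f s' <= f s
    end.

Inductive fo_term :=
| TVar of nat
| TAdd of fo_term & fo_term
| TMul of fo_term & fo_term.

Inductive fo_form :=
| FEq of fo_term & fo_term
| FLt of fo_term & fo_term
| FNot of fo_form
| FAnd of fo_form & fo_form
| FOr of fo_form & fo_form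
| FEx of nat & fo_form
| FAll of nat & fo_form.

Fixpoint teval (env : nat -> rat) (t : fo_term) : rat :=
  match t with
  | TVar i => env i
  | TAdd t1 t2 => teval env t1 + teval env t2
  | TMul t1 t2 => teval env t1 * teval env t2
  end.

Definition env_upd (env : nat -> rat) (i : nat) (q : rat) : nat -> rat :=
  fun j => if j == i then q else env j.

Fixpoint holds (env : nat -> rat) (f : fo_form) : Prop :=
  match f with
  | FEq t1 t2 => teval env t1 = teval env t2
  | FLt t1 t2 => teval env t1 < teval env t2
  | FNot f1 => ~ holds env f1
  | FAnd f1 f2 => holds env f1 /\ holds env f2
  | FOr f1 f2 => holds env f1 \/ holds env f2
  | FEx i f1 => exists q : rat, holds (env_upd env i q) f1
  | FAll i f1 => forall q : rat, holds (env_upd env i q) f1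
  end.

(* encoding of a state (l, x) as the tuple (l, x_0, ..., x_{d-1}) placed in
   variables 0..d; remaining variables are set to 0 *)
Definition state_env (G : CFG) (s : state G) : nat -> rat :=
  fun i => match i with
           | 0 => (val s.1)%:R
           | i'.+1 => match (insub i' : option 'I_(nV G)) with
                      | Some j => s.2 j
                      | None => 0
                      end
           end.

(* additionally, the value q in variable d+1 *)
Definition state_env_ext (G : CFG) (s : state G) (q : rat) : nat -> rat :=
  env_upd (state_env s) (nV G).+1 q.

Definition definable_set (G : CFG) (A : set (state G)) : Prop :=
  exists f : fo_form, forall s : state G, holds (state_env s) f <-> A s.

(* N-valued function on the domain D: its graph is definable *)
Definition definable_nfun (G : CFG) (D : set (state G)) (U : state G -> nat)
  : Prop :=
  exists f : fo_form, forall (s : state G) (q : rat),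
    holds (state_env_ext s q) f <-> (D s /\ q = (U s)%:R).

(* real-valued function on the domain D: {(s,q) | q <= F s} is definable *)
Definition definable_rfun (R : realType) (G : CFG) (D : set (state G))
    (F : state G -> R) : Prop :=
  exists f : fo_form, forall (s : state G) (q : rat),
    holds (state_env_ext s q) f <-> (D s /\ ratr q <= F s).

(* a real constant: {q | q <= r} is definable (q in variable 0) *)
Definition definable_real (R : realType) (r : R) : Prop :=
  exists f : fo_form, forall q : rat,
    holds (env_upd (fun _ => 0) 0 q) f <-> ratr q <= r.

From HB Require Import structures.
From mathcomp Require Import all_boot all_order all_algebra.
From mathcomp Require Import all_classical all_reals.
From mathcomp Require Import zify ring lra.

Set Implicit Arguments.
Unset Strict Implicit.
Unset Printing Implicit Defensive.

Import Order.TTheory GRing.Theory Num.Theory.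
Local Open Scope classical_set_scope.
Local Open Scope ring_scope.

(* Value iteration gives rational approximations [minreach j s], increasing in
   [j], of the least probability of reaching the terminal state from [s].  Their
   limit is attained by a greedy scheduler, hence bounds [Pr_term] at the
   initial state, and some horizon [K] brings [minreach K] there within
   [dl = 1/(2n)] of that limit.  As [minreach K] lies below its own Bellman
   update [minreach K.+1], [SI = min(1, 1 - minreach K + dl)] is a
   supermartingale on the invariant of all states.  If [SI s < 1] then
   [minreach K s > dl], so there is a least [j <= K] with
   [minreach j s > dl (j + 1) / (K + 1)]; this [j] is the rank [U s], and it is
   positive because [minreach 0 s = 0].  The Bellman equation at [U s] gives
   every successor of an assignment or nondeterministic state a smaller rank,
   and at a probabilistic state it gives the successors of smaller rank
   probability more than the threshold increment [dl / (K + 1)].  All these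
   objects are built from the polynomial guards and updates by finite sums,
   minima and case distinctions, so they are first-order definable. *)

(** * First-order definability *)

Definition fo_def (P : (nat -> rat) -> Prop) : Prop :=
  exists f, forall env, holds env f <-> P env.

Lemma fo_def_ext (P Q : (nat -> rat) -> Prop) :
  fo_def P -> (forall env, P env <-> Q env) -> fo_def Q.
Proof. by move=> [f Hf] PQ; exists f => env; rewrite Hf. Qed.

Lemma fo_defI (P Q : (nat -> rat) -> Prop) :
  fo_def P -> fo_def Q -> fo_def (fun env => P env /\ Q env).
Proof. by move=> [f Hf] [g Hg]; exists (FAnd f g) => env /=; rewrite Hf Hg. Qed.

Lemma fo_defU (P Q : (nat -> rat) -> Prop) :
  fo_def P -> fo_def Q -> fo_def (fun env => P env \/ Q env).
Proof. by move=> [f Hf] [g Hg]; exists (FOr f g) => env /=; rewrite Hf Hg. Qed.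

Lemma fo_defC (P : (nat -> rat) -> Prop) :
  fo_def P -> fo_def (fun env => ~ P env).
Proof. by move=> [f Hf]; exists (FNot f) => env /=; rewrite Hf. Qed.

Lemma fo_def_bool (b : bool) : fo_def (fun _ => b).
Proof.
exists (if b then FEq (TVar 0) (TVar 0) else FNot (FEq (TVar 0) (TVar 0))).
by case: b => env /=; split=> // -[].
Qed.

Lemma fo_def_exists_fin (T : finType) (P : T -> (nat -> rat) -> Prop) :
  (forall t, fo_def (P t)) -> fo_def (fun env => exists t, P t env).
Proof.
move=> defP.
suff defr (r : seq T) : fo_def (fun env => exists2 t, t \in r & P t env).
  apply: fo_def_ext (defr (enum T)) _ => env.
  by split=> [[t _ Pt] | [t Pt]]; exists t; rewrite ?mem_enum.
elim: r => [|t r IHr].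
  by apply: fo_def_ext (fo_def_bool false) _ => env; split=> // -[].
apply: fo_def_ext (fo_defU (defP t) IHr) _ => env; split.
  by case=> [Pt|[t' rt' Pt']]; [exists t; rewrite ?mem_head | exists t'; rewrite ?inE ?rt' ?orbT].
by case=> t'; rewrite inE => /predU1P[-> | rt' Pt']; [left | right; exists t'].
Qed.

Lemma fo_def_forall_fin (T : finType) (P : T -> (nat -> rat) -> Prop) :
  (forall t, fo_def (P t)) -> fo_def (fun env => forall t, P t env).
Proof.
move=> defP; apply: fo_def_ext (fo_defC (fo_def_exists_fin (fun t => fo_defC (defP t)))) _.
by move=> env; split=> [allP t | allP [t]]; [apply: contrapT => nPt; apply: allP; exists t|].
Qed.

Lemma env_upd_eq env i q : env_upd env i q i = q.
Proof. by rewrite /env_upd eqxx. Qed.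

Lemma env_upd_neq env i q j : j != i -> env_upd env i q j = env j.
Proof. by rewrite /env_upd => /negbTE ->. Qed.

Definition env_val d (ix : 'I_d -> nat) (env : nat -> rat) : {ffun 'I_d -> rat} :=
  [ffun i => env (ix i)].

Lemma env_val_upd d (ix : 'I_d -> nat) env N q :
  (forall i, ix i < N)%N -> env_val ix (env_upd env N q) = env_val ix env.
Proof. by move=> ixN; apply/ffunP => i; rewrite !ffunE env_upd_neq // neq_ltn ixN. Qed.

(* Definability wherever the valuation is stored; [N] bounds the variables
   read, so that the variables from [N] on are free for bound auxiliaries. *)
Definition vdef_fun d (F : {ffun 'I_d -> rat} -> rat) : Prop :=
  forall (ix : 'I_d -> nat) o N, (forall i, ix i < N)%N -> (o < N)%N ->
    fo_def (fun env => env o = F (env_val ix env)).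

Definition vdef_pred d (B : {ffun 'I_d -> rat} -> bool) : Prop :=
  forall (ix : 'I_d -> nat) N, (forall i, ix i < N)%N ->
    fo_def (fun env => B (env_val ix env)).

Lemma addr_idP (V : zmodType) (a : V) : a + a = a <-> a = 0.
Proof. by split=> [/(canRL (addrK a))|->]; rewrite ?subrr ?addr0. Qed.

Section ValuationDefinability.
Variable d : nat.
Implicit Types (F G : {ffun 'I_d -> rat} -> rat) (B C : {ffun 'I_d -> rat} -> bool).
Implicit Types (ix : 'I_d -> nat).

Lemma vdef_fun_ext F G : vdef_fun F -> F =1 G -> vdef_fun G.
Proof.
move=> defF FG ix o N ixN oN.
by apply: fo_def_ext (defF ix o N ixN oN) _ => env; rewrite FG.
Qed.

Lemma vdef_pred_ext B C : vdef_pred B -> B =1 C -> vdef_pred C.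
Proof.
move=> defB BC ix N ixN.
by apply: fo_def_ext (defB ix N ixN) _ => env; rewrite BC.
Qed.

(* The formula [exists N, N = F x /\ P N]. *)
Lemma fo_def_let F ix N (P : rat -> (nat -> rat) -> Prop) :
  vdef_fun F -> (forall i, ix i < N)%N ->
  (forall a q env, P a (env_upd env N q) <-> P a env) ->
  fo_def (fun env => P (env N) env) ->
  fo_def (fun env => P (F (env_val ix env)) env).
Proof.
move=> defF ixN Pfresh [f Hf].
have [g Hg] := defF ix N N.+1 (fun i => ltnW (ixN i)) (ltnSn N).
exists (FEx N (FAnd g f)) => env /=; split.
  by case=> q [/Hg + /Hf]; rewrite env_upd_eq env_val_upd // => ->; rewrite Pfresh.
move=> PF; exists (F (env_val ix env)).
by rewrite Hg Hf env_upd_eq env_val_upd // Pfresh.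
Qed.

Lemma fo_def_rel2 F G (Rel : rat -> rat -> rat -> Prop) mk ix o N :
  (forall env a b, holds env (mk a b) <-> Rel (env o) (env a) (env b)) ->
  vdef_fun F -> vdef_fun G -> (forall i, ix i < N)%N -> (o < N)%N ->
  fo_def (fun env => Rel (env o) (F (env_val ix env)) (G (env_val ix env))).
Proof.
move=> Hmk defF defG ixN oN.
apply: (fo_def_let (P := fun a env => Rel (env o) a (G (env_val ix env)))) => //.
  by move=> a q env; rewrite env_upd_neq ?env_val_upd // neq_ltn oN.
have ixN1 i : (ix i < N.+1)%N := ltnW (ixN i).
apply: (fo_def_let (N := N.+1) (P := fun b env => Rel (env o) (env N) b)) => //.
  by move=> b q env; rewrite !env_upd_neq //; apply/eqP; lia.
by exists (mk N N.+1).
Qed.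

Lemma vdef_fun_op2 F G (op : rat -> rat -> rat) mk :
  (forall env o a b, holds env (mk o a b) <-> env o = op (env a) (env b)) ->
  vdef_fun F -> vdef_fun G -> vdef_fun (fun x => op (F x) (G x)).
Proof.
move=> Hmk defF defG ix o N ixN oN.
exact: (fo_def_rel2 (Rel := fun c a b => c = op a b) (fun env => Hmk env o)).
Qed.

Lemma vdef_pred_rel2 F G (rel : rat -> rat -> bool) mk :
  (forall env a b, holds env (mk a b) <-> rel (env a) (env b)) ->
  vdef_fun F -> vdef_fun G -> vdef_pred (fun x => rel (F x) (G x)).
Proof.
move=> Hmk defF defG ix N ixN.
have ixN1 i : (ix i < N.+1)%N := ltnW (ixN i).
exact: (fo_def_rel2 (Rel := fun _ a b => rel a b) Hmk defF defG ixN1 (ltnSn N)).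
Qed.

Lemma fo_def_le_vfun F ix o N : vdef_fun F -> (forall i, ix i < N)%N -> (o < N)%N ->
  fo_def (fun env => env o <= F (env_val ix env)).
Proof.
move=> defF ixN oN.
apply: (fo_def_let (P := fun a env => env o <= a)) => //.
  by move=> a q env; rewrite env_upd_neq // neq_ltn oN.
exists (FOr (FLt (TVar o) (TVar N)) (FEq (TVar o) (TVar N))) => env /=.
by split=> [[/ltW|->]//|]; rewrite le_eqVlt => /orP[/eqP|]; auto.
Qed.

(* The signature has no constants: [0] is the solution of [a + a = a] and
   [1] the non-zero solution of [a * a = a]. *)
Lemma vdef_fun0 : vdef_fun (fun _ : {ffun 'I_d -> rat} => 0).
Proof.
move=> ix o N _ _; exists (FEq (TAdd (TVar o) (TVar o)) (TVar o)) => env.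
exact: addr_idP.
Qed.

Lemma vdef_fun1 : vdef_fun (fun _ : {ffun 'I_d -> rat} => 1).
Proof.
move=> ix o N _ _.
exists (FAnd (FEq (TMul (TVar o) (TVar o)) (TVar o))
             (FNot (FEq (TAdd (TVar o) (TVar o)) (TVar o)))) => env /=.
rewrite addr_idP; split=> [[sq nz]|->].
  by apply: (@mulfI _ (env o)); [exact/eqP | rewrite mulr1].
by rewrite mulr1; split=> // /eqP; rewrite oner_eq0.
Qed.

Lemma vdef_funD F G : vdef_fun F -> vdef_fun G -> vdef_fun (fun x => F x + G x).
Proof.
by apply: (vdef_fun_op2 (mk := fun o a b => FEq (TVar o) (TAdd (TVar a) (TVar b)))).
Qed.

Lemma vdef_funM F G : vdef_fun F -> vdef_fun G -> vdef_fun (fun x => F x * G x).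
Proof.
by apply: (vdef_fun_op2 (mk := fun o a b => FEq (TVar o) (TMul (TVar a) (TVar b)))).
Qed.

Lemma vdef_funN F : vdef_fun F -> vdef_fun (fun x => - F x).
Proof.
move=> defF; apply: (vdef_fun_op2 (G := F) (op := fun a _ => - a)
  (mk := fun o a _ => let t := TAdd (TVar o) (TVar a) in FEq (TAdd t t) t)) => //.
move=> env o a b /=; rewrite addr_idP.
by split=> [/eqP|->]; rewrite ?addr_eq0 ?addNr // => /eqP.
Qed.

Lemma vdef_fun_div F G : (forall x, G x != 0) ->
  vdef_fun F -> vdef_fun G -> vdef_fun (fun x => F x / G x).
Proof.
move=> G_neq0 defF defG ix o N ixN oN.
have defdiv := fo_def_rel2 (Rel := fun c a b => b * c = a)
  (mk := fun a b => FEq (TMul (TVar b) (TVar o)) (TVar a))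
  (fun env a b => iff_refl _) defF defG ixN oN.
apply: fo_def_ext defdiv _ => env.
have := G_neq0 (env_val ix env); set g := G _ => g_neq0.
by split=> [<-|->]; rewrite [g * _]mulrC ?mulfK ?divfK.
Qed.

Lemma vdef_fun_const (c : rat) : vdef_fun (fun _ : {ffun 'I_d -> rat} => c).
Proof.
have vdef_nat n : vdef_fun (fun _ : {ffun 'I_d -> rat} => n%:R).
  elim: n => [|n IHn]; first exact: vdef_fun0.
  by apply: vdef_fun_ext (vdef_funD IHn vdef_fun1) _ => x; rewrite natr1.
have vdef_int (z : int) : vdef_fun (fun _ : {ffun 'I_d -> rat} => z%:~R).
  case: z => n; first exact: vdef_nat.
  by apply: vdef_fun_ext (vdef_funN (vdef_nat n.+1)) _ => x; rewrite NegzE mulrNz.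
apply: vdef_fun_ext (vdef_fun_div _ (vdef_int (numq c)) (vdef_int (denq c))) _.
  by move=> _; rewrite intr_eq0 denq_neq0.
by move=> _; rewrite divq_num_den.
Qed.

Lemma vdef_fun_var (i : 'I_d) : vdef_fun (fun x => x i).
Proof.
move=> ix o N _ _; exists (FEq (TVar o) (TVar (ix i))) => env.
by rewrite ffunE.
Qed.

Lemma vdef_fun_if B F G :
  vdef_pred B -> vdef_fun F -> vdef_fun G -> vdef_fun (fun x => if B x then F x else G x).
Proof.
move=> defB defF defG ix o N ixN oN.
apply: fo_def_ext (fo_defU (fo_defI (defB ix N ixN) (defF ix o N ixN oN))
                         (fo_defI (fo_defC (defB ix N ixN)) (defG ix o N ixN oN))) _.
by move=> env; case: (B _); split=> [[[_ ->] | [nb ->]] | Ho] //; [left | right].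
Qed.

Lemma vdef_pred_const (b : bool) : vdef_pred (fun _ : {ffun 'I_d -> rat} => b).
Proof. by move=> ix N _; apply: fo_def_bool. Qed.

Lemma vdef_predI B C : vdef_pred B -> vdef_pred C -> vdef_pred (fun x => B x && C x).
Proof.
move=> defB defC ix N ixN.
by apply: fo_def_ext (fo_defI (defB ix N ixN) (defC ix N ixN)) _ => env; split=> /andP.
Qed.

Lemma vdef_predU B C : vdef_pred B -> vdef_pred C -> vdef_pred (fun x => B x || C x).
Proof.
move=> defB defC ix N ixN.
by apply: fo_def_ext (fo_defU (defB ix N ixN) (defC ix N ixN)) _ => env; split=> /orP.
Qed.

Lemma vdef_predC B : vdef_pred B -> vdef_pred (fun x => ~~ B x).
Proof.
move=> defB ix N ixN.
by apply: fo_def_ext (fo_defC (defB ix N ixN)) _ => env; split=> /negP.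
Qed.

Lemma vdef_pred_lt F G : vdef_fun F -> vdef_fun G -> vdef_pred (fun x => F x < G x).
Proof. by apply: vdef_pred_rel2 (fun a b => FLt (TVar a) (TVar b)) _. Qed.

Lemma vdef_pred_eq F G : vdef_fun F -> vdef_fun G -> vdef_pred (fun x => F x == G x).
Proof.
apply: vdef_pred_rel2 (fun a b => FEq (TVar a) (TVar b)) _.
by move=> env a b /=; split=> /eqP.
Qed.

Lemma vdef_pred_le F G : vdef_fun F -> vdef_fun G -> vdef_pred (fun x => F x <= G x).
Proof.
move=> defF defG; apply: vdef_pred_ext (vdef_predU (vdef_pred_eq defF defG)
                                                   (vdef_pred_lt defF defG)) _.
by move=> x; rewrite le_eqVlt.
Qed.

Lemma vdef_fun_min F G : vdef_fun F -> vdef_fun G -> vdef_fun (fun x => Num.min (F x) (G x)).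
Proof.
move=> defF defG; apply: vdef_fun_ext (vdef_fun_if (vdef_pred_lt defF defG) defF defG) _.
by move=> x; rewrite minElt.
Qed.

Lemma vdef_fun_aeval (e : aexpr d) : vdef_fun (fun x => aeval x e).
Proof.
elim: e => [i|c|e IHe|e1 IH1 e2 IH2|e1 IH1 e2 IH2] /=.
- exact: vdef_fun_var.
- exact: vdef_fun_const.
- exact: vdef_funN.
- exact: vdef_funD.
- exact: vdef_funM.
Qed.

Lemma vdef_pred_beval (b : bexpr d) : vdef_pred (fun x => beval x b).
Proof.
elim: b => [|e1 e2|e1 e2|e1 e2|b IHb|b1 IH1 b2 IH2|b1 IH1 b2 IH2] /=.
- exact: vdef_pred_const.
- exact: vdef_pred_lt (vdef_fun_aeval e1) (vdef_fun_aeval e2).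
- exact: vdef_pred_le (vdef_fun_aeval e1) (vdef_fun_aeval e2).
- exact: vdef_pred_eq (vdef_fun_aeval e1) (vdef_fun_aeval e2).
- exact: vdef_predC.
- exact: vdef_predI.
- exact: vdef_predU.
Qed.

Lemma vdef_pred_ffun_eq (c : {ffun 'I_d -> rat}) : vdef_pred (fun x => x == c).
Proof.
move=> ix N ixN.
have defi i := vdef_pred_eq (vdef_fun_var i) (vdef_fun_const (c i)) ixN.
apply: fo_def_ext (fo_def_forall_fin defi) _ => env.
by split=> [eqi|/eqP-> i //]; apply/eqP/ffunP => i; apply/eqP/eqi.
Qed.

Lemma vdef_fun_subst (v : 'I_d) F E : vdef_fun F -> vdef_fun E ->
  vdef_fun (fun x => F [ffun k => if k == v then E x else x k]).
Proof.
move=> defF defE ix o N ixN oN.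
apply: (fo_def_let
  (P := fun a env => env o = F [ffun k => if k == v then a else env_val ix env k])) => //.
  by move=> a q env; rewrite env_upd_neq ?env_val_upd // neq_ltn oN.
pose ix' k := if k == v then N else ix k.
have ix'N k : (ix' k < N.+1)%N.
  by rewrite /ix'; case: eqP => _; [exact: ltnSn | exact: ltnW (ixN k)].
apply: fo_def_ext (defF ix' o N.+1 ix'N (ltnW oN)) _ => env.
suff -> : env_val ix' env = [ffun k => if k == v then env N else env_val ix env k] by [].
by apply/ffunP => k; rewrite !ffunE /ix'; case: eqP.
Qed.

Lemma vdef_fun_sum (T : Type) (r : seq T) (P : T -> {ffun 'I_d -> rat} -> bool)
    (F : T -> {ffun 'I_d -> rat} -> rat) :
  (forall t, vdef_pred (P t)) -> (forall t, vdef_fun (F t)) ->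
  vdef_fun (fun x => \sum_(t <- r | P t x) F t x).
Proof.
move=> defP defF; elim: r => [|t r IHr].
  by apply: vdef_fun_ext vdef_fun0 _ => x; rewrite big_nil.
apply: vdef_fun_ext (vdef_fun_if (defP t) (vdef_funD (defF t) IHr) IHr) _ => x.
by rewrite big_cons.
Qed.

Lemma vdef_fun_bigmin (T : Type) (r : seq T) (P : T -> {ffun 'I_d -> rat} -> bool)
    (F : T -> {ffun 'I_d -> rat} -> rat) :
  (forall t, vdef_pred (P t)) -> (forall t, vdef_fun (F t)) ->
  vdef_fun (fun x => \big[Num.min/1]_(t <- r | P t x) F t x).
Proof.
move=> defP defF; elim: r => [|t r IHr].
  by apply: vdef_fun_ext vdef_fun1 _ => x; rewrite big_nil.
apply: vdef_fun_ext (vdef_fun_if (defP t) (vdef_fun_min (defF t) IHr) IHr) _ => x.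
by rewrite big_cons.
Qed.

Lemma vdef_fun_find (r : seq nat) (P : nat -> {ffun 'I_d -> rat} -> bool) :
  (forall j, vdef_pred (P j)) -> vdef_fun (fun x => (find (P^~ x) r)%:R).
Proof.
move=> defP; elim: r => [|j r IHr]; first exact: vdef_fun0.
apply: vdef_fun_ext (vdef_fun_if (defP j) vdef_fun0 (vdef_funD IHr vdef_fun1)) _ => x /=.
by case: (P j x); rewrite ?natr1.
Qed.

End ValuationDefinability.

Lemma fo_def_var_eq o (c : rat) : fo_def (fun env => env o = c).
Proof. exact: (@vdef_fun_const 0 c (fun _ => o) o o.+1 (fun _ => ltnSn o) (ltnSn o)). Qed.

Section StateDefinability.
Variable G : CFG.

Let state_ix (i : 'I_(nV G)) : nat := (val i).+1.

Lemma state_ix_lt i : (state_ix i < (nV G).+2)%N.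
Proof. exact: ltnW (ltn_ord i). Qed.

Lemma env_val_state_env s q : env_val state_ix (state_env_ext s q) = s.2.
Proof.
apply/ffunP => i; rewrite ffunE /state_env_ext env_upd_neq; last first.
  by rewrite eqSS neq_ltn ltn_ord.
by rewrite /=; case: insubP => [j _ /val_inj-> | ]; rewrite ?ltn_ord.
Qed.

Lemma fo_def_state (P : state G -> rat -> Prop) :
  (forall l, fo_def (fun env => P (l, env_val state_ix env) (env (nV G).+1))) ->
  exists f, forall s q, holds (state_env_ext s q) f <-> P s q.
Proof.
move=> defP.
have [f Hf] := fo_def_exists_fin (fun l => fo_defI (fo_def_var_eq 0 (val l)%:R) (defP l)).
exists f => -[l x] q; rewrite Hf /state_env_ext env_upd_eq env_upd_neq //.
rewrite -/(state_env_ext (l, x) q) env_val_state_env /=.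
split=> [[l' [/eqP]]|Plx]; last by exists l.
by rewrite eqr_nat => /eqP/val_inj ->.
Qed.

Lemma definable_setT : definable_set (@setT (state G)).
Proof. by exists (FEq (TVar 0) (TVar 0)). Qed.

Lemma definable_rfun_setT (R : realType) (F : state G -> rat) :
  (forall l, vdef_fun (fun x => F (l, x))) -> definable_rfun setT (fun s => ratr (F s) : R).
Proof.
move=> defF.
have [f Hf] := fo_def_state (P := fun s q => q <= F s)
  (fun l => fo_def_le_vfun (defF l) state_ix_lt (ltnSn _)).
by exists f => s q; rewrite Hf ler_rat; split=> [|[]].
Qed.

Lemma definable_nfun_setT (U : state G -> nat) :
  (forall l, vdef_fun (fun x => (U (l, x))%:R)) -> definable_nfun setT U.
Proof.
move=> defU.
have [f Hf] := fo_def_state (P := fun s q => q = (U s)%:R)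
  (fun l => defU l state_ix _ _ state_ix_lt (ltnSn _)).
by exists f => s q; rewrite Hf; split=> [|[]].
Qed.

End StateDefinability.

Lemma definable_real_rat (R : realType) (c : rat) : definable_real (ratr c : R).
Proof.
have [f Hf] := @fo_def_le_vfun 0 (fun _ => c) (fun _ => 0%N) 0 1
                 (vdef_fun_const c) (fun _ => ltn0Sn 0) (ltn0Sn 0).
by exists f => q; rewrite Hf env_upd_eq ler_rat.
Qed.

(** * Value iteration *)

Section MinReach.
Variable G : CFG.
Implicit Types (s : state G) (l : 'I_(nL G)) (x : {ffun 'I_(nV G) -> rat}).

Fixpoint minreach (j : nat) s : rat :=
  if s == sigma_bot G then 1 else
  match j with
  | 0 => 0
  | j'.+1 =>
    match kind G s.1 with
    | LNondet => \big[Num.min/1]_(l' | enabled G s.1 l' s.2)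
                   minreach j' (l', post G s.1 s.2)
    | LAssign => \sum_(l' | enabled G s.1 l' s.2) minreach j' (l', post G s.1 s.2)
    | LProb => \sum_(l' | enabled G s.1 l' s.2)
                 aeval s.2 (prob G s.1 l') * minreach j' (l', post G s.1 s.2)
    end
  end.

Lemma post_nonassign l x : kind G l <> LAssign -> post G l x = x.
Proof. by rewrite /post; case: (kind G l). Qed.

Lemma minreach_bot j : minreach j (sigma_bot G) = 1.
Proof. by case: j => /=; rewrite eqxx. Qed.

Lemma vdef_pred_bot l : vdef_pred (fun x => (l, x) == sigma_bot G).
Proof.
apply: vdef_pred_ext (vdef_predI (vdef_pred_const (l == l_out G))
                                 (vdef_pred_ffun_eq [ffun => 0])) _.
by move=> x; rewrite /sigma_bot xpair_eqE.
Qed.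

Lemma vdef_pred_enabled l l' : vdef_pred (enabled G l l').
Proof. exact: (vdef_predI (vdef_pred_const (edge G l l')) (vdef_pred_beval (guard G l l'))). Qed.

Lemma vdef_fun_post l (F : {ffun 'I_(nV G) -> rat} -> rat) :
  vdef_fun F -> vdef_fun (fun x => F (post G l x)).
Proof.
rewrite /post; case: (kind G l) => // defF; case: (upd G l) => [[v e]|] //.
exact: vdef_fun_subst defF (vdef_fun_aeval e).
Qed.

Lemma vdef_minreach j l : vdef_fun (fun x => minreach j (l, x)).
Proof.
elim: j l => [|j IHj] l /=.
  exact: vdef_fun_if (vdef_pred_bot l) (vdef_fun_const 1) (vdef_fun_const 0).
apply: vdef_fun_if (vdef_pred_bot l) (vdef_fun_const 1) _.
have defS l' := vdef_fun_post l (IHj l').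
case: (kind G l).
- exact: vdef_fun_sum (vdef_pred_enabled l) defS.
- exact: vdef_fun_bigmin (vdef_pred_enabled l) defS.
- by apply: vdef_fun_sum (vdef_pred_enabled l) _ => l'; apply: vdef_funM (vdef_fun_aeval _) _.
Qed.

Hypothesis wf : wf_CFG G.

Lemma assign_unique_succ l x : kind G l = LAssign ->
  exists l0, [/\ enabled G l l0 x, forall l', enabled G l l' x -> l' = l0 &
    forall (V : nmodType) (F : 'I_(nL G) -> V), \sum_(l' | enabled G l l' x) F l' = F l0].
Proof.
case: wf => assign_det succ_ex _ Hk.
have [_ /existsP[l0 /andP[en0 _]]] := succ_ex (l, x).
have uniq0 l' : enabled G l l' x -> l' = l0.
  by move=> /andP[e' _]; apply: assign_det Hk e' (andP en0).1.
exists l0; split=> // V F; apply: big_pred1 => l' /=.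
by apply/idP/eqP => [/uniq0|->].
Qed.

Lemma minreach_assign j l x l' : kind G l = LAssign -> (l, x) != sigma_bot G ->
  enabled G l l' x -> minreach j.+1 (l, x) = minreach j (l', post G l x).
Proof.
move=> Hk nbot en; have [l0 [_ uniq0 sum0]] := assign_unique_succ x Hk.
by rewrite /= (negbTE nbot) Hk sum0 (uniq0 _ en).
Qed.

Lemma minreach_in01 j s : 0 <= minreach j s <= 1.
Proof.
elim: j s => [|j IHj] [l x] /=; case: ifP => nbot; rewrite ?ler01 ?lexx //.
case Hk: (kind G l).
- by have [l0 [_ _ ->]] := assign_unique_succ x Hk.
- apply: (big_ind (fun y => 0 <= y <= 1)); rewrite ?ler01 ?lexx // => a b.
  by rewrite minElt; case: ifP.
- have [_ _ /(_ l x Hk) [prob_gt0 prob_sum1]] := wf.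
  apply/andP; split.
    apply: sumr_ge0 => l' en; rewrite mulr_ge0 ?(ltW (prob_gt0 _ en)) //.
    by case/andP: (IHj (l', post G l x)).
  rewrite -prob_sum1; apply: ler_sum => l' en.
  by rewrite ler_piMr ?(ltW (prob_gt0 _ en)) //; case/andP: (IHj (l', post G l x)).
Qed.

Lemma minreach_ge0 j s : 0 <= minreach j s.
Proof. by case/andP: (minreach_in01 j s). Qed.

Lemma minreach_le1 j s : minreach j s <= 1.
Proof. by case/andP: (minreach_in01 j s). Qed.

Lemma minreach_nondet j l x : kind G l = LNondet -> (l, x) != sigma_bot G ->
  minreach j.+1 (l, x) =
  \big[Num.min/1]_(l' | enabled G l l' x) minreach j (l', post G l x).
Proof. by move=> Hk nbot; rewrite /= (negbTE nbot) Hk. Qed.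

Lemma minreach_nondet_arg j l x : kind G l = LNondet -> (l, x) != sigma_bot G ->
  exists2 l0, enabled G l l0 x & minreach j.+1 (l, x) = minreach j (l0, post G l x).
Proof.
move=> Hk nbot; have [_ succ_ex _] := wf.
have [_ /existsP[l1 /andP[en1 _]]] := succ_ex (l, x).
rewrite minreach_nondet //.
rewrite (bigmin_eq_arg _ _ (enabled G l ^~ x) (fun l0 => minreach j (l0, post G l x)) en1);
  last by move=> l' _; apply: minreach_le1.
by case: arg_minP => // l0 en0 _; exists l0.
Qed.

Lemma minreach_prob j l x : kind G l = LProb -> (l, x) != sigma_bot G ->
  minreach j.+1 (l, x) =
  \sum_(l' | enabled G l l' x) aeval x (prob G l l') * minreach j (l', x).
Proof.
by move=> Hk nbot; rewrite /= (negbTE nbot) Hk post_nonassign ?Hk.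
Qed.

Lemma minreach_succ j s s' : kind G s.1 <> LProb -> s != sigma_bot G ->
  succ G s s' -> minreach j.+1 s <= minreach j s'.
Proof.
case: s => l x Hk nbot /existsP[l' /andP[en /eqP->]].
case Hk': (kind G (l, x).1) Hk => // _.
  by rewrite (minreach_assign _ Hk' nbot en).
by rewrite minreach_nondet //; apply: bigmin_le_cond.
Qed.

Lemma minreach_leS j s : minreach j s <= minreach j.+1 s.
Proof.
elim: j s => [|j IHj] [l x].
  case nbot: ((l, x) == sigma_bot G); first by rewrite (eqP nbot) !minreach_bot.
  by rewrite {1}/minreach nbot; apply: (minreach_ge0 1 (l, x)).
case nbot: ((l, x) == sigma_bot G); first by rewrite (eqP nbot) !minreach_bot.
move/negbT: nbot => nbot; case Hk: (kind G l).
- have [l0 [en0 _ _]] := assign_unique_succ x Hk.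
  by rewrite !(minreach_assign _ Hk nbot en0).
- rewrite !minreach_nondet //; apply: le_bigmin => [|l' en]; first exact: bigmin_le_id.
  apply: le_trans (IHj _).
  exact: (bigmin_le_cond _ (fun l0 => minreach j (l0, post G l x)) en).
- have [_ _ /(_ l x Hk) [prob_gt0 _]] := wf.
  rewrite !minreach_prob //; apply: ler_sum => l' en.
  by rewrite ler_wpM2l ?(ltW (prob_gt0 _ en)).
Qed.

Lemma minreach_mono s : {homo minreach^~ s : i j / (i <= j)%N >-> i <= j}.
Proof. exact: homo_leq le_refl le_trans (minreach_leS ^~ s). Qed.

End MinReach.

(** * Limit values and the greedy scheduler *)

Section ReachValue.
Variables (R : realType) (G : CFG).
Hypothesis wf : wf_CFG G.
Implicit Types (s : state G) (l : 'I_(nL G)) (x : {ffun 'I_(nV G) -> rat}).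

Definition reach_value s : R := sup (range (fun j => ratr (minreach j s))).

Lemma reach_value_has_sup s : has_sup (range (fun j => (ratr (minreach j s) : R))).
Proof.
split; first by exists (ratr (minreach 0 s)), 0%N.
by exists 1 => _ [j _ <-]; rewrite -(rmorph1 (@ratr R)) ler_rat minreach_le1.
Qed.

Lemma reach_value_ub j s : ratr (minreach j s) <= reach_value s.
Proof. by apply: (sup_upper_bound (reach_value_has_sup s)); exists j. Qed.

Lemma reach_value_le s (b : R) :
  (forall j, ratr (minreach j s) <= b) -> reach_value s <= b.
Proof.
move=> ub; apply: ge_sup; first by exists (ratr (minreach 0 s)), 0%N.
by move=> _ [j _ <-].
Qed.

Lemma reach_value_ge0 s : 0 <= reach_value s.
Proof. by apply: le_trans (reach_value_ub 0 s); rewrite ler0q minreach_ge0. Qed.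

Lemma reach_value_bot : 1 <= reach_value (sigma_bot G).
Proof. by have := reach_value_ub 0 (sigma_bot G); rewrite minreach_bot rmorph1. Qed.

Lemma reach_value_adh s (e : R) : 0 < e ->
  exists j, reach_value s - e < ratr (minreach j s).
Proof.
by move=> e_gt0; have [_ [j _ <-]] := sup_adherent e_gt0 (reach_value_has_sup s); exists j.
Qed.

Lemma reach_value_adh_fin (I : finType) (f : I -> state G) (e : R) : 0 < e ->
  exists J, forall i, reach_value (f i) - e < ratr (minreach J (f i)).
Proof.
move=> e_gt0; have [J HJ] := choice (fun i => reach_value_adh (f i) e_gt0).
exists (\max_i J i) => i; apply: lt_le_trans (HJ i) _.
by rewrite ler_rat; apply: minreach_mono => //; apply: leq_bigmax.
Qed.

Lemma reach_value_assign l x l' : kind G l = LAssign -> (l, x) != sigma_bot G ->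
  enabled G l l' x -> reach_value (l', post G l x) <= reach_value (l, x).
Proof.
move=> Hk nbot en; apply: reach_value_le => j.
by rewrite -(minreach_assign wf _ Hk nbot en) reach_value_ub.
Qed.

Lemma reach_value_nondet l x : kind G l = LNondet -> (l, x) != sigma_bot G ->
  exists2 l', enabled G l l' x & reach_value (l', post G l x) <= reach_value (l, x).
Proof.
move=> Hk nbot; apply: contrapT => no_succ.
have gap_gt0 l' : enabled G l l' x -> 0 < reach_value (l', post G l x) - reach_value (l, x).
  by move=> en; rewrite subr_gt0 ltNge; apply/negP => le_succ; apply: no_succ; exists l'.
pose e := \big[Num.min/1]_(l' | enabled G l l' x)
            (reach_value (l', post G l x) - reach_value (l, x)).
have e_gt0 : 0 < e by apply: lt_bigmin.
have [J HJ] := reach_value_adh_fin (fun l' => (l', post G l x)) e_gt0.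
have [l0 en0 eqJ] := minreach_nondet_arg wf J Hk nbot.
have := reach_value_ub J.+1 (l, x); rewrite eqJ; apply/negP; rewrite -ltNge.
apply: le_lt_trans (HJ l0); rewrite lerBrDr -lerBrDl.
exact: (bigmin_le_cond _ (fun l' => reach_value (l', post G l x) - reach_value (l, x)) en0).
Qed.

Lemma reach_value_prob l x : kind G l = LProb -> (l, x) != sigma_bot G ->
  \sum_(l' | enabled G l l' x) ratr (aeval x (prob G l l')) * reach_value (l', x)
    <= reach_value (l, x).
Proof.
move=> Hk nbot; have [_ _ /(_ l x Hk) [prob_gt0 prob_sum1]] := wf.
set c := \sum_(l' | _) _; rewrite leNgt; apply/negP => lt_c.
pose e := (c - reach_value (l, x)) / 2.
have e_gt0 : 0 < e by rewrite divr_gt0 // subr_gt0.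
have [J HJ] := reach_value_adh_fin (fun l' => (l', x)) e_gt0.
have : c - e <= ratr (minreach J.+1 (l, x)).
  rewrite minreach_prob // rmorph_sum.
  have -> : c - e = \sum_(l' | enabled G l l' x)
      ratr (aeval x (prob G l l')) * (reach_value (l', x) - e).
    rewrite /c -[in LHS](mulr1 e) -(rmorph1 (@ratr R)) -prob_sum1 rmorph_sum.
    by rewrite mulr_sumr -sumrB; apply: eq_bigr => l' _; ring.
  apply: ler_sum => l' en; rewrite rmorphM ler_wpM2l ?ler0q ?(ltW (prob_gt0 _ en)) //.
  exact: ltW (HJ l').
have := reach_value_ub J.+1 (l, x); rewrite /e; lra.
Qed.

Lemma greedy_scheduler_ex : exists2 sch : scheduler G, valid_sched G sch &
  forall h s, kind G s.1 = LNondet -> s != sigma_bot G ->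
    reach_value (sch h s) <= reach_value s.
Proof.
have greedy s : exists s', (kind G s.1 = LNondet -> succ G s s') /\
    (kind G s.1 = LNondet -> s != sigma_bot G -> reach_value s' <= reach_value s).
  case: s => l x /=; case Hk: (kind G l); try by exists (l, x).
  have [_ succ_ex _] := wf.
  have [bot|nbot] := eqVneq (l, x) (sigma_bot G).
    by have [s' succ_s'] := succ_ex (l, x); exists s'; split=> // _; rewrite bot eqxx.
  have [l' en le_l'] := reach_value_nondet Hk nbot.
  by exists (l', post G l x); split=> // _; apply/existsP; exists l'; rewrite en eqxx.
have [f Hf] := choice greedy.
by exists (fun _ s => f s) => [h s /(Hf s).1 | h s /(Hf s).2].
Qed.

Lemma reachk_le_reach_value (sch : scheduler G) :
  (forall h s, kind G s.1 = LNondet -> s != sigma_bot G ->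
     reach_value (sch h s) <= reach_value s) ->
  forall k h s, reachk R G sch k h s <= reach_value s.
Proof.
move=> sch_greedy; elim=> [|k IHk] h [l x] /=.
  by case: ifP => [/eqP->|_]; rewrite ?reach_value_bot ?reach_value_ge0.
case: ifP => [/eqP->|/negbT nbot]; first exact: reach_value_bot.
case Hk: (kind G l).
- have [l0 [en0 _ ->]] := assign_unique_succ wf x Hk.
  exact: le_trans (IHk _ _) (reach_value_assign Hk nbot en0).
- exact: le_trans (IHk _ _) (sch_greedy h (l, x) Hk nbot).
- apply: le_trans (reach_value_prob Hk nbot).
  have [_ _ /(_ l x Hk) [prob_gt0 _]] := wf.
  by apply: ler_sum => l' en; rewrite ler_wpM2l ?ler0q ?(ltW (prob_gt0 _ en)).
Qed.

Lemma Pr_visit_ge0 (sch : scheduler G) : 0 <= Pr_visit R G sch.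
Proof.
rewrite /Pr_visit; have [hs|nhs] := pselect (has_sup (range (fun k =>
  reachk R G sch k [::] (sigma_init G)))); last by rewrite sup_out.
apply: le_trans (sup_upper_bound hs (ex_intro2 _ _ 0%N I erefl)).
by rewrite /=; case: ifP.
Qed.

Lemma Pr_term_le_reach_value : Pr_term R G <= reach_value (sigma_init G).
Proof.
have [sch valid greedy] := greedy_scheduler_ex.
apply: (@le_trans _ _ (Pr_visit R G sch)).
  apply: ge_inf; last by exists sch.
  by exists 0 => _ [sch' _ <-]; apply: Pr_visit_ge0.
apply: ge_sup; first by exists (reachk R G sch 0 [::] (sigma_init G)), 0%N.
by move=> _ [k _ <-]; apply: reachk_le_reach_value.
Qed.

End ReachValue.

(** * The certificate *)

Lemma sum_le_mass_gt (T : realDomainType) (I : finType) (P : pred I) (p v : I -> T) (t : T) :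
  0 <= t -> (forall i, P i -> 0 <= p i) -> (forall i, P i -> v i <= 1) ->
  \sum_(i | P i) p i = 1 ->
  \sum_(i | P i) p i * v i <= \sum_(i | P i && (t < v i)) p i + t.
Proof.
move=> t_ge0 p_ge0 v_le1 p_sum1.
rewrite big_mkcondr -[X in _ + X]mul1r -p_sum1 mulr_suml -big_split /=.
apply: ler_sum => i Pi; have := p_ge0 i Pi; have := v_le1 i Pi.
by case: ifP => [_|/negbT]; rewrite ?add0r -?leNgt; nra.
Qed.

Section Certificate.
Variables (G : CFG) (K : nat) (dl : rat).
Implicit Types (s : state G) (l : 'I_(nL G)) (x : {ffun 'I_(nV G) -> rat}).

(* [stoch_inv] and [rank] are the [SI_n] and [U_n] of the statement. *)
Definition stoch_inv s : rat := Num.min 1 (1 - minreach K s + dl).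

Definition rank_threshold j : rat := dl * j.+1%:R / K.+1%:R.

Definition rank s : nat :=
  if (s == sigma_bot G) || (1 <= stoch_inv s) then 0
  else find (fun j => rank_threshold j < minreach j s) (iota 0 K.+1).

Lemma vdef_stoch_inv l : vdef_fun (fun x => stoch_inv (l, x)).
Proof.
apply: vdef_fun_min (vdef_fun_const 1) _.
exact: vdef_funD (vdef_funD (vdef_fun_const 1) (vdef_funN (vdef_minreach K l)))
                 (vdef_fun_const dl).
Qed.

Lemma vdef_rank l : vdef_fun (fun x => (rank (l, x))%:R).
Proof.
have defbot := vdef_predU (vdef_pred_bot l) (vdef_pred_le (vdef_fun_const 1) (vdef_stoch_inv l)).
have deffind := vdef_fun_find (iota 0 K.+1)
  (P := fun j x => rank_threshold j < minreach j (l, x))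
  (fun j => vdef_pred_lt (vdef_fun_const _) (vdef_minreach j l)).
apply: vdef_fun_ext (vdef_fun_if defbot (vdef_fun_const 0) deffind) _.
by move=> x; rewrite /rank; case: ifP.
Qed.

Lemma rank_le s : (rank s <= K.+1)%N.
Proof.
rewrite /rank; case: ifP => // _.
by rewrite (leq_trans (find_size _ _)) ?size_iota.
Qed.

Lemma rank_eq0 s : 1 <= stoch_inv s \/ s = sigma_bot G -> rank s = 0%N.
Proof. by rewrite /rank => -[->|->]; rewrite ?eqxx ?orbT. Qed.

Lemma rank_le_of_threshold j s : (j <= K)%N -> rank_threshold j < minreach j s -> (rank s <= j)%N.
Proof.
move=> le_jK lt_j; rewrite /rank; case: ifP => // _.
rewrite leqNgt; apply/negP => /(before_find 0%N).
by rewrite nth_iota ?ltnS // add0n lt_j.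
Qed.

Hypothesis dl_gt0 : 0 < dl.

Lemma rank_threshold_ge0 j : 0 <= rank_threshold j.
Proof. by rewrite /rank_threshold !mulr_ge0 ?invr_ge0 ?ltW. Qed.

Lemma rank_thresholdS j : rank_threshold j.+1 = rank_threshold j + dl / K.+1%:R.
Proof. by rewrite /rank_threshold -natr1 mulrDr mulr1 mulrDl. Qed.

Lemma rank_thresholdK : rank_threshold K = dl.
Proof. by rewrite /rank_threshold mulfK ?pnatr_eq0. Qed.

Lemma rank_threshold_lt j : rank_threshold j < rank_threshold j.+1.
Proof. by rewrite rank_thresholdS ltrDl divr_gt0 ?ltr0Sn. Qed.

Hypothesis wf : wf_CFG G.

Lemma stoch_inv_ge0 s : 0 <= stoch_inv s.
Proof. by rewrite /stoch_inv le_min ler01 addr_ge0 ?subr_ge0 ?minreach_le1 ?ltW. Qed.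

Lemma stoch_inv_succ s s' : kind G s.1 <> LProb -> s != sigma_bot G ->
  succ G s s' -> stoch_inv s' <= stoch_inv s.
Proof.
move=> Hk nbot succ_s'; apply: le_min2 => //; rewrite lerD2r lerD2l lerN2.
exact: le_trans (minreach_leS wf K s) (minreach_succ wf K Hk nbot succ_s').
Qed.

Lemma stoch_inv_prob l x : kind G l = LProb -> (l, x) != sigma_bot G ->
  \sum_(l' | enabled G l l' x) aeval x (prob G l l') * stoch_inv (l', x) <= stoch_inv (l, x).
Proof.
move=> Hk nbot; have [_ _ /(_ l x Hk) [prob_gt0 prob_sum1]] := wf.
rewrite le_min; apply/andP; split.
  rewrite -prob_sum1; apply: ler_sum => l' en.
  by rewrite ler_piMr ?(ltW (prob_gt0 _ en)) ?ge_min ?lexx.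
apply: le_trans (_ : \sum_(l' | enabled G l l' x)
    aeval x (prob G l l') * (1 - minreach K (l', x) + dl) <= _).
  apply: ler_sum => l' en; rewrite ler_wpM2l ?(ltW (prob_gt0 _ en)) //.
  by rewrite ge_min lexx orbT.
rewrite (eq_bigr (fun l' => aeval x (prob G l l') * (1 + dl)
                            - aeval x (prob G l l') * minreach K (l', x))); last first.
  by move=> l' _; ring.
rewrite sumrB -mulr_suml prob_sum1 -minreach_prob //.
by have := minreach_leS wf K (l, x); lra.
Qed.

Lemma rank_pos s : s != sigma_bot G -> stoch_inv s < 1 ->
  exists j, [/\ rank s = j.+1, (j < K)%N & rank_threshold j.+1 < minreach j.+1 s].
Proof.
move=> nbot si_lt1.
have lt_K : rank_threshold K < minreach K s.
  by move: si_lt1; rewrite rank_thresholdK /stoch_inv gt_min ltxx /=; lra.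
have has_j : has (fun j => rank_threshold j < minreach j s) (iota 0 K.+1).
  by apply/hasP; exists K; rewrite ?mem_iota ?add0n ?ltnS ?leqnn.
have rank_find : rank s = find (fun j => rank_threshold j < minreach j s) (iota 0 K.+1).
  by rewrite /rank (negbTE nbot) /= leNgt si_lt1.
have := nth_find 0%N has_j; rewrite has_find size_iota in has_j.
rewrite nth_iota // add0n -rank_find; rewrite -rank_find in has_j.
case: (rank s) has_j => [|j] lt_jK lt_j; last by exists j.
by move: lt_j; rewrite /= (negbTE nbot) ltNge rank_threshold_ge0.
Qed.

Lemma rank_succ s s' : kind G s.1 <> LProb -> s != sigma_bot G -> stoch_inv s < 1 ->
  succ G s s' -> (rank s' < rank s)%N.
Proof.
move=> Hk nbot si_lt1 succ_s'.
have [j [-> lt_jK lt_j]] := rank_pos nbot si_lt1.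
rewrite ltnS rank_le_of_threshold ?(ltnW lt_jK) //.
exact: lt_trans (rank_threshold_lt j) (lt_le_trans lt_j (minreach_succ wf j Hk nbot succ_s')).
Qed.

Lemma rank_prob_mass l x : kind G l = LProb -> (l, x) != sigma_bot G ->
  stoch_inv (l, x) < 1 ->
  dl / K.+1%:R < \sum_(l' | enabled G l l' x && (rank (l', x) < rank (l, x))%N)
                   aeval x (prob G l l').
Proof.
move=> Hk nbot si_lt1; have [_ _ /(_ l x Hk) [prob_gt0 prob_sum1]] := wf.
have [j [rank_s lt_jK lt_j]] := rank_pos nbot si_lt1.
have := sum_le_mass_gt (rank_threshold_ge0 j) (fun l' en => ltW (prob_gt0 l' en))
          (fun l' _ => minreach_le1 wf j (l', x)) prob_sum1.
rewrite -minreach_prob // => le_mass.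
have mass_le : \sum_(l' | enabled G l l' x && (rank_threshold j < minreach j (l', x)))
                  aeval x (prob G l l')
   <= \sum_(l' | enabled G l l' x && (rank (l', x) < rank (l, x))%N) aeval x (prob G l l').
  rewrite [leRHS]big_mkcondr [leLHS]big_mkcondr; apply: ler_sum => l' en.
  case: ifP => [lt_l'|_]; first by rewrite rank_s ltnS rank_le_of_threshold ?(ltnW lt_jK).
  by case: ifP => // _; apply: ltW (prob_gt0 _ en).
move: lt_j le_mass mass_le; rewrite rank_thresholdS; set gap := dl / _; lra.
Qed.

End Certificate.

Section RealCertificate.
Variables (R : realType) (G : CFG) (K : nat) (dl : rat).
Hypotheses (wf : wf_CFG G) (dl_gt0 : 0 < dl).

Lemma stoch_inv_supermartingale :
  supermartingale setT (fun s : state G => ratr (stoch_inv K dl s) : R).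
Proof.
move=> [l x] _ nbot /=; case Hk: (kind G l).
- by move=> s' succ_s'; rewrite ler_rat stoch_inv_succ ?Hk.
- by move=> s' succ_s'; rewrite ler_rat stoch_inv_succ ?Hk.
- under eq_bigr do rewrite -rmorphM.
  by rewrite -rmorph_sum ler_rat stoch_inv_prob.
Qed.

Lemma stoch_inv_init_le (p : R) : 1 - p <= Pr_term R G ->
  reach_value R (sigma_init G) - ratr dl < ratr (minreach K (sigma_init G)) ->
  ratr (stoch_inv K dl (sigma_init G)) <= p + ratr dl *+ 2.
Proof.
move=> Pterm adh; have := Pr_term_le_reach_value R wf.
have : stoch_inv K dl (sigma_init G) <= 1 - minreach K (sigma_init G) + dl.
  by rewrite ge_min lexx orbT.
rewrite -(ler_rat R) rmorphD rmorphB rmorph1 mulr2n; lra.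
Qed.

Lemma rank_descent (s : state G) :
  ~ (1 <= (ratr (stoch_inv K dl s) : R)) -> s <> sigma_bot G ->
  match kind G s.1 with
  | LProb => (ratr (dl / K.+1%:R) : R) <
      \sum_(l' | enabled G s.1 l' s.2 && (rank K dl (l', s.2) < rank K dl s)%N)
         ratr (aeval s.2 (prob G s.1 l'))
  | _ => forall s', succ G s s' -> (rank K dl s' < rank K dl s)%N
  end.
Proof.
case: s => l x si_ge1 /eqP nbot.
have si_lt1 : stoch_inv K dl (l, x) < 1.
  by rewrite ltNge -(ler_rat R) rmorph1; apply/negP.
rewrite /=; case Hk: (kind G l).
- by move=> s' succ_s'; rewrite rank_succ ?Hk.
- by move=> s' succ_s'; rewrite rank_succ ?Hk.
- by rewrite -rmorph_sum ltr_rat rank_prob_mass.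
Qed.

End RealCertificate.

Theorem mainTheorem9 (R : realType) (G : CFG) (p : R) :
  wf_CFG G -> 0 < p -> p < 1 -> 1 - p <= Pr_term R G ->
  forall n : nat, (1 <= n)%N ->
  exists (Inv : set (state G)) (SI : state G -> R) (eps : R)
         (U : state G -> nat) (H : nat),
    [/\ definable_set Inv, definable_rfun Inv SI, definable_real eps
      & definable_nfun Inv U] /\
    [/\ Inv (sigma_init G), inductive_invariant Inv,
        SI (sigma_init G) <= p + n%:R^-1,
        (forall s, Inv s -> 0 <= SI s) & supermartingale Inv SI] /\
    0 < eps /\
    (forall s, Inv s -> (U s <= H)%N) /\
    (forall s, Inv s -> (1 <= SI s \/ s = sigma_bot G) -> U s = 0%N) /\
    (forall s, Inv s -> ~ (1 <= SI s) -> s <> sigma_bot G ->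
       match kind G s.1 with
       | LProb =>
           eps < \sum_(l' | enabled G s.1 l' s.2 &&
                            (U (l', s.2) < U s)%N)
                   ratr (aeval s.2 (prob G s.1 l'))
       | _ => forall s', succ G s s' -> (U s' < U s)%N
       end).
Proof.
move=> wf _ _ Pterm n n_ge1.
pose dl : rat := n%:R^-1 / 2.
have dl_gt0 : 0 < dl by rewrite divr_gt0 ?invr_gt0 ?ltr0n.
have two_dl : ratr dl *+ 2 = n%:R^-1 :> R.
  by rewrite fmorph_div fmorphV !rmorph_nat mulr2n -splitr.
have dlR_gt0 : 0 < ratr dl :> R by rewrite ltr0q.
have [K adhK] := reach_value_adh wf (sigma_init G) dlR_gt0.
exists setT, (fun s => ratr (stoch_inv K dl s)), (ratr (dl / K.+1%:R)), (rank K dl), K.+1.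
refine (conj (And4 _ _ _ _) (conj (And5 _ _ _ _ _) (conj _ (conj _ (conj _ _))))).
- exact: definable_setT.
- exact: definable_rfun_setT (vdef_stoch_inv K dl).
- exact: definable_real_rat.
- exact: definable_nfun_setT (vdef_rank K dl).
- by [].
- by [].
- by rewrite -two_dl stoch_inv_init_le.
- by move=> s _; rewrite ler0q stoch_inv_ge0.
- exact: stoch_inv_supermartingale.
- by rewrite ltr0q divr_gt0.
- by move=> s _; apply: rank_le.
- move=> s _ [si_ge1|->]; apply: rank_eq0; last by right.
  by left; rewrite -(ler_rat R) rmorph1.
- by move=> s _; apply: rank_descent.
Qed.
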